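(* Every $\mathrm{LTL}(\sim)$-formula $\varphi$ that does not contain the operator $\mathsf X$ is stutter-invariant: for all teams $T,T'$ with $T\equiv_{\mathrm{st}}T'$ we have $T\models\varphi\iff T'\models\varphi$.
   Context: Let $\mathrm{AP}$ be a countably infinite set of atomic propositions. A trace is an infinite sequence $t=t(0)t(1)\cdots\in(\wp\mathrm{AP})^\omega$, and $t^i=t(i)t(i+1)\cdots$. A team is a (possibly empty) set $T$ of traces, and $T^i=\{t^i: t\in T\}$. Formulas of $\mathrm{LTL}(\sim)$ are given by $\varphi::=p\mid\neg\varphi\mid\varphi\wedge\varphi\mid\varphi\vee\varphi\mid\mathsf X\varphi\mid\mathsf F\varphi\mid\mathsf G\varphi\mid\varphi\,\mathsf U\,\varphi\mid\varphi\,\mathsf R\,\varphi\mid{\sim}\varphi$ with $p\in\mathrm{AP}$. Synchronous team semantics: $T\models p$ iff $p\in t(0)$ for all $t\in T$; $T\models\neg\varphi$ iff $\{t\}\not\models\varphi$ for all $t\in T$; $T\models\varphi\wedge\psi$ iff $T\models\varphi$ and $T\models\psi$; $T\models\varphi\vee\psi$ iff $T=S\cup U$ for some $S,U$ with $S\models\varphi$ and $U\models\psi$; $T\models\mathsf X\varphi$ iff $T^1\models\varphi$; $T\models\mathsf F\varphi$ iff $T^k\models\varphi$ for some $k\ge0$; $T\models\mathsf G\varphi$ iff $T^k\models\varphi$ for all $k\ge0$; $T\models\varphi\,\mathsf U\,\psi$ iff there is $k\ge0$ with $T^k\models\psi$ and $T^j\models\varphi$ for all $j<k$; $T\models\varphi\,\mathsf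 R\,\psi$ iff for all $k\ge0$, $T^k\models\psi$ or $T^j\models\varphi$ for some $j<k$; $T\models{\sim}\varphi$ iff $T\not\models\varphi$. A stuttering function of a trace $t$ is a strictly increasing function $f:\mathbb N\to\mathbb N$ with $f(0)=0$ such that $t(f(k))=t(f(k)+1)=\cdots=t(f(k+1)-1)$ for all $k\ge0$. A stuttering function of a team $T$ is a function that is a stuttering function of every $t\in T$. For $f:\mathbb N\to\mathbb N$, $t[f]:=t(f(0))t(f(1))t(f(2))\cdots$ and $T[f]:=\{t[f]:t\in T\}$. Teams $T,T'$ are stutter-equivalent ($T\equiv_{\mathrm{st}}T'$) if there are a stuttering function $f$ of $T$ and a stuttering function $f'$ of $T'$ with $T[f]=T'[f']$. *)

From Stdlib Require Import Arith.

Definition AP := nat.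
(* A letter is a subset of AP, given by its characteristic function. *)
Definition letter := AP -> bool.
Definition trace := nat -> letter.
(* A team is a (possibly empty) set of traces. *)
Definition team := trace -> Prop.

Definition tsuffix (t : trace) (i : nat) : trace := fun n => t (i + n).
Definition team_suffix (T : team) (i : nat) : team :=
  fun u => exists t, T t /\ u = tsuffix t i.
Definition singleton (t : trace) : team := fun u => u = t.

Inductive formula : Type :=
| Atom : AP -> formula
| Neg : formula -> formula
| And : formula -> formula -> formula
| Or : formula -> formula -> formula
| Next : formula -> formula
| Fut : formula -> formula
| Glob : formula -> formula
| Until : formula -> formula -> formula
| Release : formula -> formula -> formula
| Sim : formula -> formula.

Fixpoint sat (T : team) (phi : formula) {struct phi} : Prop :=
  match phi with
  | Atom p => forall t, T t -> t 0 p = true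
  | Neg a => forall t, T t -> ~ sat (singleton t) a
  | And a b => sat T a /\ sat T b
  | Or a b => exists S U : team,
      (forall t, T t <-> (S t \/ U t)) /\ sat S a /\ sat U b
  | Next a => sat (team_suffix T 1) a
  | Fut a => exists k, sat (team_suffix T k) a
  | Glob a => forall k, sat (team_suffix T k) a
  | Until a b => exists k, sat (team_suffix T k) b /\
      forall j, j < k -> sat (team_suffix T j) a
  | Release a b => forall k, sat (team_suffix T k) b \/
      exists j, j < k /\ sat (team_suffix T j) a
  | Sim a => ~ sat T a
  end.

Fixpoint X_free (phi : formula) : bool :=
  match phi with
  | Atom _ => true
  | Neg a | Fut a | Glob a | Sim a => X_free a
  | Next _ => false
  | And a b | Or a b | Until a b | Release a b => X_free a && X_free b
  end.

Definition stuttering_fun (t : trace) (f : nat -> nat) : Prop :=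
  (forall k, f k < f (S k)) /\ f 0 = 0 /\
  (forall k j, f k <= j < f (S k) -> t j = t (f k)).

Definition team_stuttering_fun (T : team) (f : nat -> nat) : Prop :=
  forall t, T t -> stuttering_fun t f.

Definition tcomp (t : trace) (f : nat -> nat) : trace := fun k => t (f k).
Definition team_comp (T : team) (f : nat -> nat) : team :=
  fun u => exists t, T t /\ u = tcomp t f.

Definition stutter_equiv (T T' : team) : Prop :=
  exists f f', team_stuttering_fun T f /\ team_stuttering_fun T' f' /\
    (forall u, team_comp T f u <-> team_comp T' f' u).

(* A stuttering function f is in particular a schedule: strictly increasing
   with f 0 = 0.  Every position j lies in a unique block [f k, f (k+1)), whose
   index k we call [block f j].  The heart of the proof is that sampling a team
   T at a schedule f along which all its traces are blockwise constant
   preserves every X-free formula: sat T phi <-> sat T[f] phi.  This is shown by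
   induction on phi, one lemma per connective.  For the temporal operators the
   suffix T^j corresponds to the suffix T[f]^(block f j) sampled at a shifted
   schedule, so the induction hypothesis turns each quantification over
   positions of T into one over positions of T[f] reindexed by [block f]; the
   transfer lemmas for F, G, U and R show that this reindexing is harmless
   because [block f] is monotone, surjective and has f as a section.
   The theorem follows by sampling both stutter-equivalent teams to their
   common team T[f] = T'[f'] (the empty team being trivial). *)

From Stdlib Require Import Arith Lia Classical FunctionalExtensionality.

Definition team_eq (T T' : team) : Prop := forall t, T t <-> T' t.

Lemma team_suffix_eq : forall T T' k,
  team_eq T T' -> team_eq (team_suffix T k) (team_suffix T' k).
Proof.
  intros T T' k H t; unfold team_suffix.
  split; intros [u [Hu ->]]; exists u; split; auto; apply H; auto.
Qed.

Lemma sat_team_eq : forall phi T T', team_eq T T' -> (sat T phi <-> sat T' phi).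
Proof.
  induction phi; intros T T' H; simpl.
  - split; intros Hs t Ht; apply Hs, H, Ht.
  - split; intros Hs t Ht; apply Hs, H, Ht.
  - rewrite (IHphi1 T T'), (IHphi2 T T'); tauto.
  - split; intros [S [U [HSU HSat]]]; exists S, U; split; auto;
      intros t; rewrite <- HSU; firstorder.
  - apply IHphi, team_suffix_eq, H.
  - assert (E := fun k => IHphi _ _ (team_suffix_eq T T' k H)).
    split; intros [k Hk]; exists k; apply (E k), Hk.
  - assert (E := fun k => IHphi _ _ (team_suffix_eq T T' k H)).
    split; intros Hk k; apply (E k), Hk.
  - assert (E1 := fun k => IHphi1 _ _ (team_suffix_eq T T' k H)).
    assert (E2 := fun k => IHphi2 _ _ (team_suffix_eq T T' k H)).
    split; intros [k [Hb Ha]]; exists k; split;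
      try (intros j Hj; apply (E1 j), Ha, Hj); apply (E2 k), Hb.
  - assert (E1 := fun k => IHphi1 _ _ (team_suffix_eq T T' k H)).
    assert (E2 := fun k => IHphi2 _ _ (team_suffix_eq T T' k H)).
    split; intros Hk k; destruct (Hk k) as [B | [j [Hj A]]];
      try (left; apply (E2 k), B); right; exists j; split; auto; apply (E1 j), A.
  - rewrite (IHphi T T' H); tauto.
Qed.

(* The order-theoretic part of a stuttering function. *)
Definition schedule (f : nat -> nat) : Prop :=
  (forall k, f k < f (S k)) /\ f 0 = 0.

(* The data-dependent part: every trace of T is constant on each f-block. *)
Definition blockwise_constant (T : team) (f : nat -> nat) : Prop :=
  forall t, T t -> forall k j, f k <= j < f (S k) -> t j = t (f k).

(* [block f j] is the index of the f-block containing j, computed incrementally. *)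
Fixpoint block (f : nat -> nat) (j : nat) : nat :=
  match j with
  | 0 => 0
  | S j' => let k := block f j' in if f (S k) <=? S j' then S k else k
  end.

Section Schedule.
Variable f : nat -> nat.
Hypothesis Hf : schedule f.

Lemma schedule_lt : forall a b, a < b -> f a < f b.
Proof.
  destruct Hf as [Hinc _]; intros a b H; induction H.
  - apply Hinc.
  - specialize (Hinc m); lia.
Qed.

Lemma schedule_le : forall a b, a <= b -> f a <= f b.
Proof.
  intros a b H; destruct (Nat.eq_dec a b) as [-> | Hne]; [lia |].
  pose proof (schedule_lt a b); lia.
Qed.

Lemma block_spec : forall j, f (block f j) <= j < f (S (block f j)).
Proof.
  destruct Hf as [Hinc H0].
  induction j; simpl.
  - rewrite H0; specialize (Hinc 0); lia.
  - destruct (Nat.leb_spec (f (S (block f j))) (S j)).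
    + specialize (Hinc (S (block f j))); lia.
    + lia.
Qed.

(* Blocks are disjoint, so the block index is determined by membership. *)
Lemma block_unique : forall k j, f k <= j < f (S k) -> block f j = k.
Proof.
  intros k j H; pose proof (block_spec j).
  destruct (lt_eq_lt_dec (block f j) k) as [[L | E] | L]; auto.
  - pose proof (schedule_le (S (block f j)) k L); lia.
  - pose proof (schedule_le (S k) (block f j) L); lia.
Qed.

Lemma block_of_f : forall k, block f (f k) = k.
Proof.
  intros k; apply block_unique; destruct Hf as [Hinc _]; specialize (Hinc k); lia.
Qed.

Lemma block_lt : forall i k, i < f k -> block f i < k.
Proof.
  intros i k H; pose proof (block_spec i).
  destruct (le_lt_dec k (block f i)) as [L | L]; auto.
  pose proof (schedule_le _ _ L); lia.
Qed.

Lemma lt_block : forall m j, m < block f j -> f m < j.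
Proof.
  intros m j H; pose proof (block_spec j).
  pose proof (schedule_le (S m) (block f j) H).
  destruct Hf as [Hinc _]; specialize (Hinc m); lia.
Qed.

(* Transfer of the temporal quantifier patterns along the reindexing
   [block f]: P speaks about positions j, Q about block indices. *)
Section Transfer.
Variables P1 P2 Q1 Q2 : nat -> Prop.
Hypothesis HP1 : forall j, P1 j <-> Q1 (block f j).
Hypothesis HP2 : forall j, P2 j <-> Q2 (block f j).

Lemma exists_transfer : (exists j, P2 j) <-> (exists k, Q2 k).
Proof.
  split.
  - intros [j Hj]; exists (block f j); apply HP2, Hj.
  - intros [k Hk]; exists (f k); apply HP2; rewrite block_of_f; exact Hk.
Qed.

Lemma forall_transfer : (forall j, P2 j) <-> (forall k, Q2 k).
Proof.
  split.
  - intros H k; rewrite <- (block_of_f k); apply HP2, H.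
  - intros H j; apply HP2, H.
Qed.

Lemma until_transfer :
  (exists j, P2 j /\ forall i, i < j -> P1 i) <->
  (exists k, Q2 k /\ forall m, m < k -> Q1 m).
Proof.
  split.
  - intros [j [Hb Ha]]; exists (block f j); split; [apply HP2, Hb |].
    intros m Hm; rewrite <- (block_of_f m); apply HP1, Ha, lt_block, Hm.
  - intros [k [Hb Ha]]; exists (f k); split.
    + apply HP2; rewrite block_of_f; exact Hb.
    + intros i Hi; apply HP1, Ha, block_lt, Hi.
Qed.

Lemma release_transfer :
  (forall j, P2 j \/ exists i, i < j /\ P1 i) <->
  (forall k, Q2 k \/ exists m, m < k /\ Q1 m).
Proof.
  split.
  - intros H k; destruct (H (f k)) as [B | [i [Hi A]]].
    + left; rewrite <- (block_of_f k); apply HP2, B.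
    + right; exists (block f i); split; [apply block_lt, Hi | apply HP1, A].
  - intros H j; destruct (H (block f j)) as [B | [m [Hm A]]].
    + left; apply HP2, B.
    + right; exists (f m); split; [apply lt_block, Hm |].
      apply HP1; rewrite block_of_f; exact A.
Qed.

End Transfer.

(* The schedule seen from position j: its blocks are those of f restricted
   to [j, oo), the first one being the remainder of the block of j. *)
Definition shift (j n : nat) : nat :=
  match n with 0 => 0 | S n => f (S (block f j) + n) - j end.

Lemma shift_schedule : forall j, schedule (shift j).
Proof.
  intros j; split; auto.
  pose proof (block_spec j).
  intros [| n]; unfold shift; simpl.
  - rewrite Nat.add_0_r; lia.
  - pose proof (schedule_le (S (block f j)) (S (block f j) + n) ltac:(lia)).
    pose proof (schedule_lt (S (block f j) + n) (S (block f j) + S n) ltac:(lia)).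
    simpl in *; lia.
Qed.

Lemma shift_succ : forall j n, j + shift j (S n) = f (S (block f j) + n).
Proof.
  intros j n; unfold shift; pose proof (block_spec j).
  pose proof (schedule_le (S (block f j)) (S (block f j) + n) ltac:(lia)); lia.
Qed.

Lemma shift_blockwise : forall T j,
  blockwise_constant T f -> blockwise_constant (team_suffix T j) (shift j).
Proof.
  intros T j HB u [t [Ht ->]] k i Hi; unfold tsuffix.
  pose proof (block_spec j).
  destruct k as [| n].
  - simpl in Hi |- *; rewrite Nat.add_0_r in *.
    rewrite (HB t Ht (block f j) (j + i)) by lia.
    rewrite (HB t Ht (block f j) j) by lia; reflexivity.
  - rewrite shift_succ; apply (HB t Ht).
    pose proof (shift_succ j n); pose proof (shift_succ j (S n)).
    replace (S (S (block f j) + n)) with (S (block f j) + S n) by lia; lia.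
Qed.

Lemma suffix_comp_shift : forall T j, blockwise_constant T f ->
  team_eq (team_suffix (team_comp T f) (block f j))
          (team_comp (team_suffix T j) (shift j)).
Proof.
  intros T j HB u; pose proof (block_spec j).
  assert (Hpt : forall t, T t ->
            tsuffix (tcomp t f) (block f j) = tcomp (tsuffix t j) (shift j)).
  { intros t Ht; apply functional_extensionality; intros [| n];
      unfold tsuffix, tcomp.
    - simpl; rewrite !Nat.add_0_r; symmetry; apply (HB t Ht); lia.
    - rewrite shift_succ; do 2 f_equal; lia. }
  split.
  - intros [v [[t [Ht ->]] ->]]; exists (tsuffix t j).
    split; [exists t; auto | apply Hpt, Ht].
  - intros [v [[t [Ht ->]] ->]]; exists (tcomp t f).
    split; [exists t; auto | symmetry; apply Hpt, Ht].
Qed.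

End Schedule.

Lemma team_comp_split : forall T S U f,
  team_eq T (fun t => S t \/ U t) ->
  team_eq (team_comp T f) (fun u => team_comp S f u \/ team_comp U f u).
Proof.
  intros T S U f H u; split.
  - intros [t [Ht ->]]; apply H in Ht as [Ht | Ht]; [left | right]; exists t; auto.
  - intros [[t [Ht ->]] | [t [Ht ->]]]; exists t; split; auto; apply H; auto.
Qed.

Lemma team_comp_preimage : forall T S' f,
  (forall u, S' u -> team_comp T f u) ->
  team_eq (team_comp (fun t => T t /\ S' (tcomp t f)) f) S'.
Proof.
  intros T S' f H u; split.
  - intros [t [[_ Hs] ->]]; exact Hs.
  - intros Hu; destruct (H u Hu) as [t [Ht ->]]; exists t; auto.
Qed.

Lemma team_comp_singleton : forall t f,
  team_eq (team_comp (singleton t) f) (singleton (tcomp t f)).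
Proof.
  intros t f u; unfold team_comp, singleton; split.
  - intros [v [-> ->]]; reflexivity.
  - intros ->; exists t; auto.
Qed.

Definition sampling_invariant (phi : formula) : Prop :=
  forall T f, schedule f -> blockwise_constant T f ->
    (sat T phi <-> sat (team_comp T f) phi).

Lemma sampling_atom : forall p, sampling_invariant (Atom p).
Proof.
  intros p T f [_ H0] _; simpl; split.
  - intros H u [t [Ht ->]]; unfold tcomp; rewrite H0; auto.
  - intros H t Ht; rewrite <- H0; apply (H (tcomp t f)); exists t; auto.
Qed.

Lemma sampling_neg : forall a, sampling_invariant a -> sampling_invariant (Neg a).
Proof.
  intros a IH T f Hf HB; simpl.
  assert (Hs : forall t, T t ->
            (sat (singleton t) a <-> sat (singleton (tcomp t f)) a)).
  { intros t Ht; rewrite (IH (singleton t) f Hf).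
    - apply sat_team_eq, team_comp_singleton.
    - intros v Hv; unfold singleton in Hv; subst; apply HB, Ht. }
  split.
  - intros H u [t [Ht ->]]; rewrite <- Hs; auto.
  - intros H t Ht; rewrite Hs; auto; apply H; exists t; auto.
Qed.

Lemma sampling_and : forall a b, sampling_invariant a -> sampling_invariant b ->
  sampling_invariant (And a b).
Proof.
  intros a b IHa IHb T f Hf HB; simpl; rewrite (IHa T f), (IHb T f); tauto.
Qed.

Lemma sampling_or : forall a b, sampling_invariant a -> sampling_invariant b ->
  sampling_invariant (Or a b).
Proof.
  intros a b IHa IHb T f Hf HB; simpl.
  assert (Hsub : forall S, (forall t, S t -> T t) -> blockwise_constant S f)
    by (intros S HS t Ht; apply HB, HS, Ht).
  split.
  - intros [S [U [HSU [A B]]]]; exists (team_comp S f), (team_comp U f).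
    split; [exact (team_comp_split T S U f HSU) |].
    split; [apply IHa | apply IHb]; auto; apply Hsub; firstorder.
  - intros [S' [U' [HSU [A B]]]].
    exists (fun t => T t /\ S' (tcomp t f)), (fun t => T t /\ U' (tcomp t f)).
    split.
    + intros t; split; [| tauto].
      intros Ht; destruct (proj1 (HSU _) (ex_intro _ t (conj Ht eq_refl))); auto.
    + split.
      * apply (IHa _ f Hf); [apply Hsub; tauto |].
        apply (sat_team_eq a S'); [| exact A].
        intros u; symmetry; apply team_comp_preimage; firstorder.
      * apply (IHb _ f Hf); [apply Hsub; tauto |].
        apply (sat_team_eq b U'); [| exact B].
        intros u; symmetry; apply team_comp_preimage; firstorder.
Qed.

(* The induction hypothesis, applied to suffixes, yields the reindexing
   required by the transfer lemmas. *)
Lemma sampling_suffix : forall a T f, sampling_invariant a -> schedule f ->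
  blockwise_constant T f -> forall j,
  sat (team_suffix T j) a <-> sat (team_suffix (team_comp T f) (block f j)) a.
Proof.
  intros a T f IH Hf HB j.
  rewrite (IH _ (shift f j) (shift_schedule f Hf j) (shift_blockwise f Hf T j HB)).
  apply sat_team_eq; intros u; rewrite (suffix_comp_shift f Hf T j HB u); tauto.
Qed.

Lemma sampling_fut : forall a, sampling_invariant a -> sampling_invariant (Fut a).
Proof.
  intros a IH T f Hf HB; apply (exists_transfer f Hf).
  exact (sampling_suffix a T f IH Hf HB).
Qed.

Lemma sampling_glob : forall a, sampling_invariant a -> sampling_invariant (Glob a).
Proof.
  intros a IH T f Hf HB; apply (forall_transfer f Hf).
  exact (sampling_suffix a T f IH Hf HB).
Qed.

Lemma sampling_until : forall a b, sampling_invariant a -> sampling_invariant b ->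
  sampling_invariant (Until a b).
Proof.
  intros a b IHa IHb T f Hf HB; apply (until_transfer f Hf);
    apply sampling_suffix; auto.
Qed.

Lemma sampling_release : forall a b, sampling_invariant a -> sampling_invariant b ->
  sampling_invariant (Release a b).
Proof.
  intros a b IHa IHb T f Hf HB; apply (release_transfer f Hf);
    apply sampling_suffix; auto.
Qed.

Lemma sampling_sim : forall a, sampling_invariant a -> sampling_invariant (Sim a).
Proof.
  intros a IH T f Hf HB; simpl; rewrite (IH T f Hf HB); tauto.
Qed.

Lemma X_free_sampling_invariant : forall phi, X_free phi = true ->
  sampling_invariant phi.
Proof.
  induction phi; simpl; intros HX;
    try (apply andb_prop in HX; destruct HX as [HX1 HX2]).
  - apply sampling_atom.
  - apply sampling_neg; auto.
  - apply sampling_and; auto.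
  - apply sampling_or; auto.
  - discriminate.
  - apply sampling_fut; auto.
  - apply sampling_glob; auto.
  - apply sampling_until; auto.
  - apply sampling_release; auto.
  - apply sampling_sim; auto.
Qed.

(* A team and its sampling at any of its stuttering functions agree on X-free
   formulas; for the empty team, f need not be a schedule but T[f] is empty. *)
Lemma sat_stutter_sample : forall phi T f, X_free phi = true ->
  team_stuttering_fun T f -> (sat T phi <-> sat (team_comp T f) phi).
Proof.
  intros phi T f HX HS.
  destruct (classic (exists t, T t)) as [[t Ht] | Hempty].
  - apply X_free_sampling_invariant; auto.
    + destruct (HS t Ht) as [Hinc [H0 _]]; split; auto.
    + intros u Hu; apply HS, Hu.
  - apply sat_team_eq; intros u; split.
    + intros Hu; exfalso; apply Hempty; eauto.
    + intros [v [Hv _]]; exfalso; apply Hempty; eauto.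
Qed.

Theorem mainTheorem9 : forall (phi : formula), X_free phi = true ->
  forall T T' : team, stutter_equiv T T' -> (sat T phi <-> sat T' phi).
Proof.
  intros phi HX T T' [f [f' [Hf [Hf' Hsame]]]].
  rewrite (sat_stutter_sample phi T f HX Hf), (sat_stutter_sample phi T' f' HX Hf').
  exact (sat_team_eq phi _ _ Hsame).
Qed.
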